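(* Let $p$ be a prime with $p\equiv 1\pmod 3$, let $H_p=\mathrm{PSL}_2(F_p)$, let $A_p=\{(x_i)\in F_3^{p+1}\mid \sum_{i=1}^{p+1}x_i=0\}$ and $G_p=A_p\rtimes H_p$ (as defined in the context). Let $K$ be a group and let $N<G_p\times K$ be a subgroup which is normalized by $G_p\times\{e\}$. Then $N$ is equal to $\{e\}\times L$, $A_p\times L$ or $G_p\times L$, for some subgroup $L<K$.
   Context: $F_q$ denotes the field with $q$ elements. $\mathrm{PSL}_2(F_p)=\mathrm{SL}_2(F_p)/\{\pm I\}$ acts on the projective line $\mathrm{P}^1(F_p)=F_p\cup\{\infty\}$ by linear fractional transformations $\begin{pmatrix}a&b\\c&d\end{pmatrix}\cdot x=\frac{ax+b}{cx+d}$. This induces the permutational representation of $\mathrm{PSL}_2(F_p)$ on $F_3^{\mathrm{P}^1(F_p)}$ given by $g\cdot x=(x_{g^{-1}\cdot i})_{i\in\mathrm{P}^1(F_p)}$. One identifies $F_3^{\mathrm{P}^1(F_p)}$ with $F_3^{p+1}$ via a fixed bijection $\mathrm{P}^1(F_p)\rightarrow\{1,\dots,p+1\}$ sending $\infty$ to $p+1$. The subspace $A_p$ (vectors with coordinate sum $0$) is $H_p$-invariant, and $G_p=A_p\rtimes H_p$ is the corresponding semidirect product, with $A_p$ and $H_p$ viewed as subgroups of $G_p$. *)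

From HB Require Import structures.
From mathcomp Require Import all_boot all_order all_algebra all_fingroup.
Set Implicit Arguments. Unset Strict Implicit. Unset Printing Implicit Defensive.
Import GRing.Theory.

Section Gp.
Variable p : nat.

(* The projective line P^1(F_p) = F_p ∪ {∞}, with None standing for ∞. *)
Definition P1 := option 'F_p.

Definition lft (M : 'M['F_p]_2) (x : P1) : P1 :=
  let a := M ord0 ord0 in let b := M ord0 ord_max in
  let c := M ord_max ord0 in let d := M ord_max ord_max in
  match x with
  | None => if c == 0 then None else Some (a / c)
  | Some t => if c * t + d == 0 then None else Some ((a * t + b) / (c * t + d))
  end%R.

(* H_p = PSL_2(F_p), realized (faithfully) as the group of permutations of
   P^1(F_p) given by linear fractional transformations of determinant 1. *)
Definition Hp : {set {perm P1}} :=
  [set s : {perm P1} | [exists M : 'M['F_p]_2,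
      (\det M == 1)%R && [forall x, s x == lft M x]]].

Definition vec := {ffun P1 -> 'F_3}.

(* permutation action on coordinates: (h . b)_i = b_{h i}; with MathComp's
   composition convention ((s * t) x = t (s x)) this is a left action. *)
Definition pact (h : {perm P1}) (b : vec) : vec := [ffun i => b (h i)].

Lemma pact1 b : pact 1 b = b.
Proof. by apply/ffunP=> i; rewrite ffunE perm1. Qed.

Lemma pactM h k b : pact (h * k) b = pact h (pact k b).
Proof. by apply/ffunP=> i; rewrite !ffunE permM. Qed.

Lemma pactD h a b : pact h (a + b)%R = (pact h a + pact h b)%R.
Proof. by apply/ffunP=> i; rewrite !ffunE. Qed.

Lemma pactN h a : pact h (- a)%R = (- pact h a)%R.
Proof. by apply/ffunP=> i; rewrite !ffunE. Qed.

(* The ambient group: F_3^{P^1} ⋊ Sym(P^1) *)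
Definition W := (vec * {perm P1})%type.
HB.instance Definition _ := Finite.on W.

Definition mulW (x y : W) : W := ((x.1 + pact x.2 y.1)%R, (x.2 * y.2)%g).
Definition oneW : W := (0%R, 1%g).
Definition invW (x : W) : W := ((- pact (x.2^-1)%g x.1)%R, (x.2^-1)%g).

Lemma mulWA : associative mulW.
Proof.
by case=> a h [b k] [c l]; rewrite /mulW /= pactD pactM addrA mulgA.
Qed.

Lemma mul1W : left_id oneW mulW.
Proof. by case=> b k; rewrite /mulW /= pact1 add0r mul1g. Qed.

Lemma mulVW : left_inverse oneW invW mulW.
Proof.
case=> a h; by rewrite /mulW /invW /= addNr mulVg.
Qed.

HB.instance Definition _ := Finite_isGroup.Build W mulWA mul1W mulVW.

Definition Ap : {set W} :=
  [set g : W | ((\sum_i g.1 i)%R == 0%R) && (g.2 == 1%g)].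

Definition Gp : {set W} :=
  [set g : W | ((\sum_i g.1 i)%R == 0%R) && (g.2 \in Hp)].

End Gp.

Definition is_subgroup (K : groupType) (S : K -> Prop) : Prop :=
  [/\ S 1%g, (forall x y, S x -> S y -> S (x * y)%g) & (forall x, S x -> S (x^-1)%g)].

Definition is_subgroup_GpxK (p : nat) (K : groupType) (N : W p * K -> Prop) : Prop :=
  [/\ (forall x, N x -> x.1 \in Gp p),
      N (1%g, 1%g),
      (forall x y, N x -> N y -> N ((x.1 * y.1)%g, (x.2 * y.2)%g)) &
      (forall x, N x -> N ((x.1^-1)%g, (x.2^-1)%g))].

Definition normalized_by_Gp (p : nat) (K : groupType) (N : W p * K -> Prop) : Prop :=
  forall g x, g \in Gp p -> N x -> N ((g * x.1 * g^-1)%g, x.2).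

(* H_p = PSL_2(F_p) is simple by Iwasawa's argument: a nontrivial normal subgroup
   Q is transitive on the projective line, so Q and the translations together
   contain every conjugate of a translation, and these generate H_p; every
   translation is a commutator [diag(2, 1/2), t], so the translations lie in Q.
   Since p = 1 (mod 3), the sum of the translates of a vector of A_p with
   coordinate 1 at infinity is (1, -1, ..., -1), whose H_p-images span A_p; hence
   A_p is a minimal normal subgroup of G_p, maximal as G_p / A_p = H_p, and
   self-centralizing as H_p acts faithfully. So the normal subgroups of G_p are
   1, A_p and G_p, and no two of them satisfy M > N >= [G_p, M].
   For N <= G_p x K normalized by G_p, the projection M of N to G_p and the
   kernel {g | (g, e) in N} are such a pair; hence they coincide and N = M x L. *)

From HB Require Import structures.
From mathcomp Require Import all_boot all_order all_algebra all_fingroup.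
From mathcomp Require Import all_solvable ring.
From mathcomp Require Import boolp.
Set Implicit Arguments. Unset Strict Implicit. Unset Printing Implicit Defensive.
Import GRing.Theory.

Lemma det_mx22 (R : comRingType) (M : 'M[R]_2) :
  (\det M = M ord0 ord0 * M ord_max ord_max - M ord0 ord_max * M ord_max ord0)%R.
Proof.
rewrite (expand_det_row _ ord0) !big_ord_recl big_ord0 /cofactor !det_mx11.
rewrite !mxE /= /bump /= expr0 expr1.
have -> : lift ord0 ord0 = ord_max :> 'I_2 by apply: val_inj.
have -> : lift (ord_max : 'I_2) ord0 = ord0 :> 'I_2 by apply: val_inj.
by rewrite !mul1r addr0 mulN1r mulrN.
Qed.

Lemma sum_option (T : finType) (V : nmodType) (f : option T -> V) :
  (\sum_x f x = f None + \sum_t f (Some t))%R.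
Proof.
rewrite (bigD1 None) //=; congr (_ + _)%R.
by rewrite (reindex_omap Some id) => [|[]] //=; apply: eq_bigl => t; rewrite eqxx.
Qed.

Lemma sum_indicator (T : finType) (R : nzSemiRingType) (j : T) :
  (\sum_i (i == j)%:R = 1 :> R)%R.
Proof. by rewrite (bigD1 j) //= eqxx big1 ?addr0 // => i /negbTE ->. Qed.

Section Iwasawa.
Variable gT : finGroupType.
Local Open Scope group_scope.

(* [Q <*> U] is abelian modulo [Q], so
   [U \subset G^`(1) \subset (Q <*> U)^`(1) \subset Q]. *)
Lemma iwasawa_normal_sub (G Q U : {group gT}) :
  Q <| G -> U \subset G -> abelian U -> G \subset Q <*> U -> U \subset G^`(1) ->
  G \subset Q.
Proof.
move=> /andP [sQG nQG] sUG cUU sGQU sUG'.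
have nQQU : Q <*> U \subset 'N(Q) by rewrite join_subG normG (subset_trans sUG).
have sQU'Q : (Q <*> U)^`(1) \subset Q.
  by apply: der1_min nQQU _; rewrite quotientYidl ?quotient_abelian ?(subset_trans sUG).
have sUQ : U \subset Q := subset_trans sUG' (subset_trans (dergS 1 sGQU) sQU'Q).
by apply: subset_trans sGQU _; rewrite join_subG subxx.
Qed.

End Iwasawa.

Section MinimalMaximalNormal.
Variables (gT : finGroupType) (G A : {group gT}).
Local Open Scope group_scope.
Hypotheses (minA : minnormal A G) (maxA : maxnormal A G G) (cGA : 'C_G(A) \subset A).

Lemma normal_trichotomy (M : {group gT}) : M <| G -> [\/ M :=: 1, M :=: A | M :=: G].
Proof.
case/andP => sMG nMG; have /andP [sAG nAG] := maxnormal_normal maxA.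
have nMA_G : G \subset 'N(M :&: A) by rewrite normsI.
have [MA1|ntMA] := eqsVneq (M :&: A) 1.
  apply: Or31; apply/trivgP; rewrite -MA1 subsetIidl (subset_trans _ cGA) // subsetI sMG.
  apply/commG1P/trivgP; rewrite -MA1 commg_subI // subsetI ?subxx.
    by rewrite (subset_trans sMG).
  by rewrite (subset_trans sAG).
have /mingroupP [_ minAP] := minA.
have sAM : A \subset M.
  by rewrite -(minAP [group of M :&: A]) ?subsetIl ?subsetIr ?ntMA.
have [->|neMG] := eqsVneq M G; first exact: Or33.
apply: Or32; have /maxgroupP [_ maxAP] := maxA.
by apply: maxAP sAM; rewrite properEneq neMG sMG.
Qed.

Hypothesis der1_notsubA : ~~ ([~: G, G] \subset A).

Lemma comm_normal_sub (M N : {group gT}) :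
  M <| G -> N <| G -> [~: G, M] \subset N -> M \subset N.
Proof.
move=> nsMG nsNG sGMN; have [->|MA|MG] := normal_trichotomy nsMG; first exact: sub1G.
  have [N1|->|->] := normal_trichotomy nsNG; [|by rewrite MA | exact: normal_sub].
  have /properP [_ [g Gg notAg]] := maxnormal_proper maxA.
  have cAG : G \subset 'C(A) by apply/commG1P/trivgP; rewrite -N1 -MA.
  by case/negP: notAg; apply: (subsetP cGA); rewrite inE Gg (subsetP cAG).
have sGGN : [~: G, G] \subset N by rewrite -{2}MG.
have [N1|NA|->] := normal_trichotomy nsNG; last by rewrite MG.
  by case/negP: der1_notsubA; rewrite (subset_trans sGGN) // N1 sub1G.
by case/negP: der1_notsubA; rewrite -NA.
Qed.

End MinimalMaximalNormal.

Section NormalizedSubgroups.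
Variables (gT : finGroupType) (G : {group gT}) (K : groupType) (N : gT * K -> Prop).
Local Open Scope group_scope.
Hypotheses (NG : forall x, N x -> x.1 \in G) (N1 : N (1, 1)).
Hypotheses (NM : forall x y, N x -> N y -> N (x.1 * y.1, x.2 * y.2))
  (NV : forall x, N x -> N (x.1^-1, x.2^-1)).
Hypothesis nNG : forall g x, g \in G -> N x -> N (g * x.1 * g^-1, x.2).

Definition proj_fst : {set gT} := [set g | `[< exists k, N (g, k) >]].
Definition ker_snd : {set gT} := [set g | `[< N (g, 1) >]].

Lemma proj_fstP g : reflect (exists k, N (g, k)) (g \in proj_fst).
Proof. by rewrite inE; apply: asboolP. Qed.

Lemma ker_sndP g : reflect (N (g, 1)) (g \in ker_snd).
Proof. by rewrite inE; apply: asboolP. Qed.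

Lemma proj_fst_group_set : group_set proj_fst.
Proof.
apply/group_setP; split => [|x y /proj_fstP [k Nk] /proj_fstP [l Nl]]; apply/proj_fstP.
  by exists 1.
by exists (k * l); apply: (NM Nk Nl).
Qed.
Canonical proj_fst_group := group proj_fst_group_set.

Lemma ker_snd_group_set : group_set ker_snd.
Proof.
apply/group_setP; split => [|x y /ker_sndP Nx /ker_sndP Ny]; apply/ker_sndP => //.
by have := NM Nx Ny; rewrite /= mulg1.
Qed.
Canonical ker_snd_group := group ker_snd_group_set.

Lemma N_conj g x k : g \in G -> N (x, k) -> N (x ^ g, k).
Proof. by move=> Gg /(nNG (groupVr Gg)); rewrite /= invgK conjgE mulgA. Qed.

Lemma proj_fst_normal : proj_fst <| G.
Proof.
apply/andP; split; first by apply/subsetP => g /proj_fstP [k /NG].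
apply/subsetP => g Gg; rewrite inE; apply/subsetP => _ /imsetP [x /proj_fstP [k Nk] ->].
by apply/proj_fstP; exists k; apply: N_conj.
Qed.

Lemma ker_snd_normal : ker_snd <| G.
Proof.
apply/andP; split; first by apply/subsetP => g /ker_sndP /NG.
apply/subsetP => g Gg; rewrite inE; apply/subsetP => _ /imsetP [x /ker_sndP Nx ->].
by apply/ker_sndP; apply: N_conj.
Qed.

Lemma comm_proj_fst_sub : [~: G, proj_fst] \subset ker_snd.
Proof.
rewrite gen_subG; apply/subsetP => _ /imset2P [g x Gg /proj_fstP [k Nk] ->].
apply/ker_sndP; have := NM (N_conj Gg (NV Nk)) Nk.
by rewrite /= mulVg commgEr.
Qed.

Hypothesis comm_sub :
  forall M L : {group gT}, M <| G -> L <| G -> [~: G, M] \subset L -> M \subset L.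

Lemma normalized_subgroup_prod : exists2 M : {group gT}, M <| G &
  exists L : K -> Prop, is_subgroup L /\ forall g k, N (g, k) <-> g \in M /\ L k.
Proof.
have sPK := comm_sub proj_fst_normal ker_snd_normal comm_proj_fst_sub.
exists proj_fst_group; first exact: proj_fst_normal.
exists (fun k => N (1, k)); split.
  split=> // [k l Nk Nl|k Nk]; first by have := NM Nk Nl; rewrite /= mulg1.
  by have := NV Nk; rewrite /= invg1.
move=> g k; split => [Ngk|[/(subsetP sPK) /ker_sndP Ng N1k]].
  have /ker_sndP Ng : g \in ker_snd by apply/(subsetP sPK)/proj_fstP; exists k.
  split; first by apply/proj_fstP; exists k.
  by have := NM (NV Ng) Ngk; rewrite /= mulVg invg1 mul1g.
by have := NM Ng N1k; rewrite /= mulg1 mul1g.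
Qed.

End NormalizedSubgroups.

Section Mobius.
Variable F : fieldType.
Local Open Scope ring_scope.
Implicit Types (a b c d l t : F) (x : option F) (w : F * F).

Definition hcoord x : F * F := if x is Some t then (t, 1) else (1, 0).
Definition hproj w : option F := if w.2 == 0 then None else Some (w.1 / w.2).
Definition hscale l w : F * F := (l * w.1, l * w.2).
Definition hmul a b c d w : F * F := (a * w.1 + b * w.2, c * w.1 + d * w.2).

Definition mobius a b c d x : option F := hproj (hmul a b c d (hcoord x)).

Lemma mobiusE a b c d x : mobius a b c d x =
  if x is Some t then
    if c * t + d == 0 then None else Some ((a * t + b) / (c * t + d))
  else if c == 0 then None else Some (a / c).
Proof. by case: x => [t|]; rewrite /mobius /hproj /= ?mulr1 ?mulr0 ?addr0. Qed.

Lemma hprojZ l w : l != 0 -> hproj (hscale l w) = hproj w.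
Proof.
move=> l0; rewrite /hproj /= mulf_eq0 (negbTE l0) /=.
by case: eqP => // /eqP w2; congr Some; field; apply/andP.
Qed.

Lemma hmulZ a b c d l w : hmul a b c d (hscale l w) = hscale l (hmul a b c d w).
Proof. by rewrite /hmul /hscale /=; congr pair; ring. Qed.

Lemma hmulM a b c d a' b' c' d' w :
  hmul a b c d (hmul a' b' c' d' w) =
  hmul (a * a' + b * c') (a * b' + b * d') (c * a' + d * c') (c * b' + d * d') w.
Proof. by rewrite /hmul /=; congr pair; ring. Qed.

Lemma hcoordK w : w != (0, 0) -> exists2 l, l != 0 & w = hscale l (hcoord (hproj w)).
Proof.
case: w => u v w0; rewrite /hproj /hscale /=; case: eqP => [v0|/eqP v0] /=.
  by exists u; [apply: contraNneq w0 => u0; rewrite u0 v0 | rewrite v0 mulr1 mulr0].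
by exists v => //; rewrite mulr1; congr pair; field.
Qed.

Lemma hcoord_neq0 x : hcoord x != (0, 0).
Proof. by case: x => [t|]; rewrite xpair_eqE oner_eq0 ?andbF. Qed.

Lemma hmul_neq0 a b c d w : a * d - b * c != 0 -> w != (0, 0) ->
  hmul a b c d w != (0, 0).
Proof.
case: w => u v det0; apply: contraNneq; rewrite /hmul /= => -[e1 e2].
have eu : (a * d - b * c) * u = d * (a * u + b * v) - b * (c * u + d * v) by ring.
have ev : (a * d - b * c) * v = a * (c * u + d * v) - c * (a * u + b * v) by ring.
move: eu ev; rewrite e1 e2 !mulr0 subrr => /eqP + /eqP.
by rewrite !mulf_eq0 (negbTE det0) => /eqP -> /eqP ->.
Qed.

Lemma mobiusM a b c d a' b' c' d' x : a' * d' - b' * c' != 0 ->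
  mobius a b c d (mobius a' b' c' d' x) =
  mobius (a * a' + b * c') (a * b' + b * d') (c * a' + d * c') (c * b' + d * d') x.
Proof.
move=> det0; rewrite /mobius -hmulM.
have [l l0 {2}->] := hcoordK (hmul_neq0 det0 (hcoord_neq0 x)).
by rewrite hmulZ hprojZ.
Qed.

Lemma mobius_scalar l x : l != 0 -> mobius l 0 0 l x = x.
Proof.
move=> l0; rewrite mobiusE; case: x => [t|]; rewrite ?eqxx //.
by rewrite mul0r add0r (negbTE l0) addr0; congr Some; field.
Qed.

End Mobius.

Section PSL2.
Variable F : finFieldType.
Local Open Scope ring_scope.
Implicit Types (a b c d e l t : F) (x : option F).

(* The identity on singular matrices, only to make [mobius_perm] total. *)
Definition mobius_fun a b c d : option F -> option F :=
  if a * d - b * c != 0 then mobius a b c d else id.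

Lemma mobius_fun_inj a b c d : injective (mobius_fun a b c d).
Proof.
rewrite /mobius_fun; case: ifP => [det0|_] //.
apply: (can_inj (g := mobius d (- b) (- c) a)) => x.
rewrite mobiusM // -[RHS](mobius_scalar x det0); congr mobius; ring.
Qed.

Definition mobius_perm a b c d : {perm option F} := perm (@mobius_fun_inj a b c d).

Lemma mobius_permE a b c d : a * d - b * c = 1 -> mobius_perm a b c d =1 mobius a b c d.
Proof. by move=> det1 x; rewrite permE /mobius_fun det1 oner_neq0. Qed.

Lemma mobius_permM a b c d a' b' c' d' :
  a * d - b * c = 1 -> a' * d' - b' * c' = 1 ->
  (mobius_perm a' b' c' d' * mobius_perm a b c d)%g =
  mobius_perm (a * a' + b * c') (a * b' + b * d') (c * a' + d * c') (c * b' + d * d').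
Proof.
move=> det1 det1'; apply/permP => x.
rewrite permM !mobius_permE ?mobiusM ?det1' ?oner_neq0 //.
by rewrite -[1](mulr1 1) -{1}det1 -det1'; ring.
Qed.

Lemma mobius_perm1 : mobius_perm 1 0 0 1 = 1%g.
Proof.
apply/permP => x; rewrite perm1 mobius_permE ?mobius_scalar ?oner_neq0 //.
by rewrite mulr1 mulr0 subr0.
Qed.

Lemma mobius_permV a b c d : a * d - b * c = 1 ->
  (mobius_perm a b c d)^-1%g = mobius_perm d (- b) (- c) a.
Proof.
move=> det1; apply/eqP; rewrite eq_invg_mul mobius_permM //; last by rewrite -det1; ring.
by rewrite -mobius_perm1; apply/eqP; congr mobius_perm; rewrite -?det1; ring.
Qed.

Definition PSL2 : {set {perm option F}} :=
  [set s | [exists M : 'M[F]_2, (\det M == 1) && (s == mobius_perm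
     (M ord0 ord0) (M ord0 ord_max) (M ord_max ord0) (M ord_max ord_max))]].

Lemma PSL2P s :
  reflect (exists a b c d, a * d - b * c = 1 /\ s = mobius_perm a b c d) (s \in PSL2).
Proof.
rewrite inE; apply: (iffP existsP) => [[M /andP [/eqP detM /eqP ->]]|].
  by do 4!eexists; split; last reflexivity; rewrite -det_mx22.
case=> a [b [c [d [det1 ->]]]].
exists (\matrix_(i < 2, j < 2) (nth [::] [:: [:: a; b]; [:: c; d]] i)`_j).
by rewrite det_mx22 !mxE /= det1 !eqxx.
Qed.

Lemma mobius_perm_PSL2 a b c d : a * d - b * c = 1 -> mobius_perm a b c d \in PSL2.
Proof. by move=> det1; apply/PSL2P; exists a, b, c, d. Qed.

Lemma PSL2_group_set : group_set PSL2.
Proof.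
apply/group_setP; split.
  by rewrite -mobius_perm1 mobius_perm_PSL2 // mulr1 mulr0 subr0.
move=> _ _ /PSL2P [a [b [c [d [det1 ->]]]]] /PSL2P [a' [b' [c' [d' [det1' ->]]]]].
rewrite mobius_permM // mobius_perm_PSL2 //.
by rewrite -[1](mulr1 1) -{1}det1 -det1'; ring.
Qed.
Canonical PSL2_group := group PSL2_group_set.

Definition transl e := mobius_perm 1 e 0 1.

Lemma transl_det e : 1 * 1 - e * 0 = 1 :> F.
Proof. by rewrite mulr1 mulr0 subr0. Qed.

Lemma transl_PSL2 e : transl e \in PSL2.
Proof. exact/mobius_perm_PSL2/transl_det. Qed.

Lemma transl_Some e t : transl e (Some t) = Some (t + e).
Proof.
by rewrite mobius_permE ?transl_det // mobiusE mul0r add0r oner_eq0 !mul1r divr1.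
Qed.

Lemma transl_None e : transl e None = None.
Proof. by rewrite mobius_permE ?transl_det // mobiusE eqxx. Qed.

Lemma translD e e' : (transl e * transl e')%g = transl (e + e').
Proof. by rewrite mobius_permM ?transl_det //; congr mobius_perm; ring. Qed.

Lemma transl0 : transl 0 = 1%g.
Proof. exact: mobius_perm1. Qed.

Lemma translN e : (transl e)^-1%g = transl (- e).
Proof. by apply/eqP; rewrite eq_invg_mul translD subrr transl0. Qed.

Lemma transl_neq1 e : e != 0 -> transl e != 1%g.
Proof.
move=> e0; apply/eqP => /(congr1 (fun s : {perm option F} => s (Some 0))).
by rewrite transl_Some perm1 add0r => -[] /eqP; apply/negP.
Qed.

Definition translations := [set transl e | e : F].

Lemma translations_group_set : group_set translations.
Proof.
apply/group_setP; split; first by apply/imsetP; exists 0; rewrite ?transl0.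
by move=> _ _ /imsetP [e _ ->] /imsetP [e' _ ->]; rewrite translD imset_f.
Qed.
Canonical translations_group := group translations_group_set.

Lemma translations_abelian : abelian translations.
Proof.
by apply/centsP => _ /imsetP [e _ ->] _ /imsetP [e' _ ->]; rewrite /commute !translD addrC.
Qed.

Lemma translations_PSL2 : translations \subset PSL2.
Proof. by apply/subsetP => _ /imsetP [e _ ->]; apply: transl_PSL2. Qed.

Definition weyl := mobius_perm 0 (-1) 1 0.

Lemma weyl_det : 0 * 0 - (-1) * 1 = 1 :> F.
Proof. ring. Qed.

Lemma PSL2_transitive w : exists2 g, g \in PSL2 & g None = w.
Proof.
case: w => [t|]; last by exists 1%g; rewrite ?group1 ?perm1.
exists (weyl * transl t)%g; first by rewrite groupM ?transl_PSL2 ?mobius_perm_PSL2 ?weyl_det.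
by rewrite permM /weyl mobius_permE ?weyl_det // mobiusE oner_eq0 mul0r transl_Some add0r.
Qed.

Lemma stab_conj_transl g e : g \in PSL2 -> g None = None -> (transl e ^ g)%g \in translations.
Proof.
case/PSL2P => a [b [c [d [det1 ->]]]]; rewrite mobius_permE // mobiusE.
case: eqP => [c0 _|//]; subst c; move: det1; rewrite mulr0 subr0 => det1.
have d0 : d != 0 by apply: contra_eq_neq det1 => ->; rewrite mulr0 eq_sym oner_neq0.
have -> : a = d^-1 by apply: (mulIf d0); rewrite mulVf.
apply/imsetP; exists (e / d ^+ 2) => //.
rewrite /conjg mobius_permV ?mulr0 ?subr0 // /transl.
rewrite !mobius_permM ?transl_det ?mulr0 ?subr0 //; try congr mobius_perm.
all: by field.
Qed.

Definition lower c := mobius_perm 1 0 c 1.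

Lemma lower_det c : 1 * 1 - 0 * c = 1 :> F.
Proof. by rewrite mulr1 mul0r subr0. Qed.

Lemma lower_conj_transl c : lower c = (transl (- c) ^ weyl)%g.
Proof.
rewrite /lower /conjg mobius_permV ?weyl_det // /transl !mobius_permM ?transl_det ?weyl_det //.
  by congr mobius_perm; ring.
all: ring.
Qed.

Lemma mobius_perm_factor a b c d : a * d - b * c = 1 -> c != 0 ->
  mobius_perm a b c d =
    (transl ((d - 1) / c)%R * lower c * transl ((a - 1) / c)%R)%g.
Proof.
move=> det1 c0; have -> : b = (a * d - 1) / c by rewrite -det1; field.
rewrite /transl /lower !mobius_permM ?transl_det ?lower_det //.
  by congr mobius_perm; field.
by field.
Qed.

Lemma mobius_perm_upper a b d : a * d - b * 0 = 1 ->
  mobius_perm a b 0 d = (mobius_perm a b a (b + d) * lower (-1))%g.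
Proof.
move=> det1; rewrite /lower mobius_permM ?lower_det //; last by rewrite -det1; ring.
by congr mobius_perm; ring.
Qed.

Lemma PSL2_sub_conj_transl (X : {group {perm option F}}) :
  (forall g e, g \in PSL2 -> (transl e ^ g)%g \in X) -> PSL2 \subset X.
Proof.
move=> conjX; have translX e : transl e \in X by rewrite -(conjg1 (transl e)) conjX.
have gen a b c d : a * d - b * c = 1 -> c != 0 -> mobius_perm a b c d \in X.
  move=> det1 c0; rewrite mobius_perm_factor // !groupM // lower_conj_transl.
  by rewrite conjX // mobius_perm_PSL2 ?weyl_det.
apply/subsetP => _ /PSL2P [a [b [c [d [det1 ->]]]]].
have [c0|] := eqVneq c 0; last exact: gen.
subst c; rewrite mobius_perm_upper // groupM ?gen ?lower_det ?oppr_eq0 ?oner_eq0 //.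
  by rewrite -det1; ring.
by apply: contra_eq_neq det1 => ->; rewrite !mul0r mulr0 subr0 eq_sym oner_neq0.
Qed.

Definition diag l := mobius_perm l 0 0 l^-1.

Lemma diag_PSL2 l : l != 0 -> diag l \in PSL2.
Proof. by move=> l0; rewrite mobius_perm_PSL2 // mulfV // mulr0 subr0. Qed.

Lemma comm_diag_transl l e : l != 0 ->
  [~ diag l, transl e]%g = transl ((1 - l ^+ 2) * e)%R.
Proof.
move=> l0; have det1 : l * l^-1 - 0 * 0 = 1 by rewrite mulfV // mulr0 subr0.
rewrite /commg /conjg /diag /transl !mobius_permV ?transl_det //.
rewrite !mobius_permM ?transl_det //; try by rewrite -det1; field.
by congr mobius_perm; field.
Qed.

Lemma normal_PSL2_transitive (Q : {group {perm option F}}) :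
  (Q <| PSL2)%g -> (Q :!=: 1)%g -> forall w, exists2 q, q \in Q & q None = w.
Proof.
case/andP => sQ nQ ntQ.
have [q1 Qq1 movq1] : exists2 q, q \in Q & q None != None.
  have [q Qq ntq] := trivgPn _ ntQ.
  have [w qw] : exists w, q w != w.
    apply/existsP; apply: contraR ntq => /existsPn fixq.
    by apply/eqP/permP => w; rewrite perm1; apply/eqP/negbNE/fixq.
  have [g Pg gN] := PSL2_transitive w.
  exists (q ^ g^-1)%g; first by rewrite memJ_norm // (subsetP nQ) ?groupV.
  rewrite conjgE invgK !permM gN; apply: contraNneq qw => qwg.
  by rewrite -[q w](permKV g) qwg gN.
case=> [t|]; last by exists 1%g; rewrite ?group1 ?perm1.
case E: (q1 None) movq1 => [t1|] // _.
exists (q1 ^ transl (t - t1))%g; first by rewrite memJ_norm // (subsetP nQ) ?transl_PSL2.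
by rewrite conjgE !permM translN transl_None E transl_Some addrC subrK.
Qed.

Lemma PSL2_sub_join_translations (Q : {group {perm option F}}) :
  (Q <| PSL2)%g -> (Q :!=: 1)%g -> PSL2 \subset (Q <*> translations)%g.
Proof.
move=> nsQ ntQ; apply: PSL2_sub_conj_transl => g e Pg.
have [q Qq qN] := normal_PSL2_transitive nsQ ntQ (g None).
have Pq := subsetP (normal_sub nsQ) q Qq.
rewrite -(mulgKV q g) conjgM; apply: groupJ; last exact: subsetP (joing_subl _ _) q Qq.
apply: (subsetP (joing_subr _ _)); rewrite stab_conj_transl ?groupM ?groupV //.
by rewrite permM -qN permK.
Qed.

End PSL2.

Section PSL2Simple.
Variables (F : finFieldType) (l : F).
Hypotheses (l_neq0 : l != 0%R) (l2_neq1 : (l ^+ 2 != 1)%R).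
Local Open Scope group_scope.

Lemma translations_sub_der1 : translations F \subset (PSL2 F)^`(1).
Proof.
apply/subsetP => _ /imsetP [b _ ->].
have l2 : (1 - l ^+ 2 != 0)%R by rewrite subr_eq0 eq_sym.
have -> : transl b = [~ diag l, transl (b / (1 - l ^+ 2))%R].
  by rewrite comm_diag_transl // mulrC divfK.
by rewrite derg1 mem_commg ?transl_PSL2 ?diag_PSL2.
Qed.

Theorem PSL2_simple : simple (PSL2 F).
Proof.
apply/simpleP; split.
  by apply/trivgPn; exists (transl 1%R); rewrite ?transl_PSL2 ?transl_neq1 ?oner_neq0.
move=> Q nQ; have [->|ntQ] := eqsVneq Q 1; [by left | right].
apply/eqP; rewrite eqEsubset normal_sub //=.
exact: iwasawa_normal_sub nQ (translations_PSL2 F) (translations_abelian F)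
  (PSL2_sub_join_translations nQ ntQ) translations_sub_der1.
Qed.

End PSL2Simple.

Section PrimeField.
Variable p : nat.
Local Open Scope ring_scope.

Lemma lftE (M : 'M['F_p]_2) :
  lft M =1 mobius (M ord0 ord0) (M ord0 ord_max) (M ord_max ord0) (M ord_max ord_max).
Proof. by move=> x; rewrite mobiusE. Qed.

Lemma Hp_PSL2 : Hp p = PSL2 'F_p.
Proof.
apply/setP => s; rewrite !inE; apply: eq_existsb => M.
have [detM|] //= := eqVneq (\det M) 1; rewrite det_mx22 in detM.
apply/forallP/eqP => [sM|-> x]; last by rewrite mobius_permE // lftE.
by apply/permP => x; rewrite mobius_permE // -lftE; apply/eqP.
Qed.

Lemma Hp_group_set : group_set (Hp p).
Proof. by rewrite Hp_PSL2 groupP. Qed.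
Canonical Hp_group := group Hp_group_set.

Lemma transl_Hp (e : 'F_p) : transl e \in Hp p.
Proof. by rewrite Hp_PSL2 transl_PSL2. Qed.

Hypotheses (p_prime : prime p) (p_mod3 : (p %% 3 = 1)%N).

Lemma Fp_nat_neq0 n : (0 < n < p)%N -> n%:R != 0 :> 'F_p.
Proof.
case/andP => n_gt0 n_ltp; apply/eqP => n0.
by have := val_Fp_nat p_prime n; rewrite n0 modn_small // => n_eq0; rewrite -n_eq0 in n_gt0.
Qed.

Lemma prime_mod3_gt3 : (3 < p)%N.
Proof. by move: p_prime p_mod3; case: (p) => [|[|[|[|]]]]. Qed.

Lemma Fp_two_neq0 : 2 != 0 :> 'F_p.
Proof. by apply: Fp_nat_neq0; rewrite /= (ltn_trans _ prime_mod3_gt3). Qed.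

Lemma Fp_one_sub_two_sqr_neq0 : 1 - 2 ^+ 2 != 0 :> 'F_p.
Proof.
rewrite -oppr_eq0 opprB (_ : 2 ^+ 2 - 1 = 3%:R).
  by apply: Fp_nat_neq0; rewrite /= prime_mod3_gt3.
by rewrite -natrX -(natrB _ (_ : 1 <= 2 ^ 2)%N).
Qed.

Lemma Hp_simple : simple (Hp p).
Proof.
rewrite Hp_PSL2; apply: (@PSL2_simple _ 2); first exact: Fp_two_neq0.
by rewrite eq_sym -subr_eq0 Fp_one_sub_two_sqr_neq0.
Qed.

End PrimeField.

Section SemidirectProduct.
Variable p : nat.
Local Notation W := (W p).
Local Notation vec := (vec p).
Local Open Scope ring_scope.
Implicit Types (a b : vec) (h : {perm P1 p}) (x : W).

Definition vecW a : W := (a, 1%g).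
Definition permW h : W := (0, h).

Lemma pactE h a i : pact h a i = a (h i).
Proof. by rewrite ffunE. Qed.

Lemma pact0 h : pact h 0 = 0.
Proof. by apply/ffunP => i; rewrite !ffunE. Qed.

Lemma sum_pact h a : \sum_i pact h a i = \sum_i a i.
Proof.
by rewrite [RHS](reindex_inj (@perm_inj _ h)); apply: eq_bigr => i _; rewrite pactE.
Qed.

Lemma sum_vecD a b : \sum_i (a + b) i = \sum_i a i + \sum_i b i.
Proof. by rewrite -big_split; apply: eq_bigr => i _; rewrite ffunE. Qed.

Lemma sum_vec0 : \sum_i (0 : vec) i = 0.
Proof. by rewrite big1 // => i _; rewrite ffunE. Qed.

Lemma vecWD a b : vecW (a + b) = (vecW a * vecW b)%g.
Proof. by rewrite /vecW /mulg /= /mulW /= pact1 mulg1. Qed.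

Lemma vecW_conj a x : (vecW a ^ x)%g = vecW (pact x.2^-1 a).
Proof.
case: x => b h; rewrite /conjg /vecW /invg /mulg /= /invW /mulW /= pact1 mul1g mulVg.
by rewrite pactD addrCA addNr addr0.
Qed.

Lemma vecW_pact h a : vecW (pact h a) = (vecW a ^ permW h^-1)%g.
Proof. by rewrite vecW_conj invgK. Qed.

Lemma permW1 : permW 1 = 1%g.
Proof. by []. Qed.

Lemma permWM h h' : permW (h * h') = (permW h * permW h')%g.
Proof. by rewrite /permW /mulg /= /mulW /= pact0 addr0. Qed.

Lemma permWV h : permW h^-1 = (permW h)^-1%g.
Proof. by rewrite /permW /invg /= /invW /= pact0 oppr0. Qed.

Lemma permW_comm h h' : permW [~ h, h'] = [~ permW h, permW h']%g.
Proof. by rewrite /commg /conjg !permWM !permWV. Qed.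

Lemma GpE x : (x \in Gp p) = (\sum_i x.1 i == 0) && (x.2 \in Hp p).
Proof. by rewrite inE. Qed.

Lemma permW_Gp h : (permW h \in Gp p) = (h \in Hp p).
Proof. by rewrite GpE sum_vec0 eqxx. Qed.

Lemma Gp_group_set : group_set (Gp p).
Proof.
apply/group_setP; split; first by rewrite -permW1 permW_Gp group1.
move=> [a h] [b k]; rewrite !GpE => /andP [/eqP sa Hh] /andP [/eqP sb Hk].
by rewrite sum_vecD sum_pact sa sb addr0 eqxx groupM.
Qed.
Canonical Gp_group := group Gp_group_set.

Lemma Ap_group_set : group_set (Ap p).
Proof.
apply/group_setP; split; first by rewrite -permW1 inE sum_vec0 !eqxx.
move=> [a h] [b k]; rewrite !inE => /andP [/eqP sa /eqP /= ->] /andP [/eqP sb /eqP /= ->].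
by rewrite sum_vecD sum_pact sa sb addr0 mulg1 !eqxx.
Qed.
Canonical Ap_group := group Ap_group_set.

Lemma vecW_Ap a : (vecW a \in Ap p) = (\sum_i a i == 0).
Proof. by rewrite inE eqxx andbT. Qed.

Lemma ApP x : reflect (exists2 a : vec, \sum_i a i = 0 & x = vecW a) (x \in Ap p).
Proof.
apply: (iffP idP) => [|[a /eqP sa ->]]; last by rewrite vecW_Ap.
by case: x => a h; rewrite inE => /andP [/eqP sa /eqP /= ->]; exists a.
Qed.

Lemma Ap_sub_Gp : Ap p \subset Gp p.
Proof. by apply/subsetP => _ /ApP [a sa ->]; rewrite GpE sa eqxx group1. Qed.

Lemma Ap_normal : (Ap p <| Gp p)%g.
Proof.
rewrite /normal Ap_sub_Gp; apply/subsetP => x _; rewrite inE.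
by apply/subsetP => _ /imsetP [_ /ApP [a sa ->] ->]; rewrite vecW_conj vecW_Ap sum_pact sa.
Qed.

End SemidirectProduct.

Lemma F3_unit_mulrn (c : 'F_3) : c != 0%R -> (c *+ c = 1)%R.
Proof. by case: c => [[|[|[|]]]] //= ? _; apply: val_inj. Qed.

Lemma F3_oppE (c : 'F_3) : (- c = c *+ 2)%R.
Proof. by case: c => [[|[|[|]]]] //= ?; apply: val_inj. Qed.

Section InvariantSubsets.
Variable p : nat.
Hypotheses (p_prime : prime p) (p_mod3 : (p %% 3 = 1)%N).
Local Notation vec := (vec p).
Local Open Scope ring_scope.
Implicit Types (a b : vec).

Definition star : vec := [ffun x => if x is None then 1 else -1].
Definition delta (j : P1 p) : vec := [ffun x => (x == j)%:R - (x == None)%:R].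

(* The coordinate at infinity is multiplied by #|F_p| = p, which is 1 in F_3. *)
Lemma sum_pact_transl b :
  \sum_i b i = 0 -> b None = 1 -> \sum_(e : 'F_p) pact (transl e) b = star.
Proof.
move=> sb b1; apply/ffunP => x; rewrite sum_ffunE !ffunE.
case: x => [t|]; last first.
  rewrite (eq_bigr (fun _ => b None)) => [|e _]; last by rewrite pactE transl_None.
  by rewrite sumr_const card_Fp // -mulr_natr -Fp_nat_mod // p_mod3 b1 mulr1.
rewrite (eq_bigr (fun e => b (Some (t + e)))) => [|e _]; last by rewrite pactE transl_Some.
have -> : \sum_(e : 'F_p) b (Some (t + e)) = \sum_(e : 'F_p) b (Some e).
  by rewrite [RHS](reindex_inj (addrI t)).
by apply/eqP; rewrite -addr_eq0 addrC -b1 -sum_option sb.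
Qed.

Lemma star_sub_pact g : star - pact g^-1%g star = delta (g None).
Proof.
apply/ffunP => x; rewrite !ffunE.
have [->|xg] := eqVneq x (g None).
  by rewrite permK; case: (g None) => [t|]; apply/val_inj.
case E: (g^-1%g x) => [s|]; last by case/eqP: xg; rewrite -E permKV.
by case: x {xg E} => [t|]; apply/val_inj.
Qed.

Lemma sum0_decomp b : \sum_i b i = 0 -> b = \sum_j delta j *+ b j.
Proof.
move=> sb; apply/ffunP => x; rewrite sum_ffunE.
rewrite (eq_bigr (fun j => b j * delta j x)) => [|j _]; last first.
  by rewrite ffunMnE -mulr_natr mulrC; congr (_ * _); apply: natr_Zp.
under eq_bigr => j _ do rewrite ffunE mulrBr.
rewrite sumrB -mulr_suml sb mul0r subr0 (bigD1 x) //= eqxx mulr1 big1 ?addr0 //.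
by move=> j /negbTE; rewrite eq_sym => ->; rewrite mulr0.
Qed.

Lemma sum_delta (j : P1 p) : \sum_i delta j i = 0.
Proof. by under eq_bigr => i _ do rewrite ffunE; rewrite sumrB !sum_indicator subrr. Qed.

Lemma delta_neq0 (t : 'F_p) : delta (Some t) != 0.
Proof. by apply/eqP => /ffunP /(_ (Some t)); rewrite !ffunE eqxx. Qed.

Variable S : {pred vec}.
Hypotheses (S0 : 0 \in S) (S_add : {in S &, forall a b, a + b \in S}).
Hypothesis S_pact : forall h a, h \in Hp p -> a \in S -> pact h a \in S.

Lemma S_sum (I : Type) (r : seq I) (f : I -> vec) :
  (forall i, f i \in S) -> \sum_(i <- r) f i \in S.
Proof. by move=> Sf; elim/big_rec: _ => // i b _; apply: S_add. Qed.

Lemma S_muln a n : a \in S -> a *+ n \in S.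
Proof. by move=> Sa; elim: n => [|n Sn]; rewrite ?mulr0n // mulrS S_add. Qed.

Lemma S_opp a : a \in S -> - a \in S.
Proof.
move=> Sa; have -> : - a = a *+ 2 by apply/ffunP => x; rewrite ffunMnE ffunE F3_oppE.
exact: S_muln.
Qed.

Lemma S_normalize a : a \in S -> \sum_i a i = 0 -> a != 0 ->
  exists2 b, b \in S & \sum_i b i = 0 /\ b None = 1.
Proof.
move=> Sa sa a0; have [i ai] : exists i, a i != 0.
  apply/existsP; apply: contraNT a0 => /existsPn a0.
  by apply/eqP/ffunP => x; rewrite ffunE; apply/eqP/negbNE; apply: a0.
have [g Pg gi] := PSL2_transitive i; rewrite -Hp_PSL2 in Pg.
exists (pact g a *+ a i); first by rewrite S_muln ?S_pact.
split; last by rewrite ffunMnE pactE gi F3_unit_mulrn.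
by under eq_bigr => x _ do rewrite ffunMnE; rewrite sumrMnl sum_pact sa mul0rn.
Qed.

Lemma star_in a : a \in S -> \sum_i a i = 0 -> a != 0 -> star \in S.
Proof.
move=> Sa sa a0; have [b Sb [sb b1]] := S_normalize Sa sa a0.
by rewrite -(sum_pact_transl sb b1) S_sum // => e; rewrite S_pact ?transl_Hp.
Qed.

Lemma sum0_sub_invariant a b : a \in S -> \sum_i a i = 0 -> a != 0 ->
  \sum_i b i = 0 -> b \in S.
Proof.
move=> Sa sa a0 sb; have Sstar := star_in Sa sa a0.
rewrite (sum0_decomp sb) S_sum // => j; apply: S_muln.
have [g Pg <-] := PSL2_transitive j; rewrite -Hp_PSL2 in Pg.
by rewrite -star_sub_pact S_add ?S_opp ?S_pact ?groupV.
Qed.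

End InvariantSubsets.

Section GpStructure.
Variable p : nat.
Hypotheses (p_prime : prime p) (p_mod3 : (p %% 3 = 1)%N).
Local Notation W := (W p).
Local Notation vec := (vec p).
Implicit Types (a : vec) (h : {perm P1 p}) (x : W).
Local Open Scope group_scope.

Lemma pact_faithful h : (forall a, \sum_i a i = 0 -> pact h a = a)%R -> h = 1.
Proof.
move=> fix_h; have fixSome t : h (Some t) = Some t.
  have /ffunP /(_ (Some t)) := fix_h _ (sum_delta (Some t)).
  by rewrite pactE !ffunE eqxx; case: eqP => // _; case: (_ == None).
apply/permP => -[t|]; rewrite perm1 ?fixSome //.
by case E: (h None) => [t|] //; move: E; rewrite -(fixSome t) => /perm_inj.
Qed.

Lemma cent_Ap_sub : 'C_(Gp p)(Ap p) \subset Ap p.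
Proof.
apply/subsetP => -[b h] /setIP [Gx /centP cAx].
have h1 : h = 1.
  apply/eqP; rewrite -invg_eq1; apply/eqP/pact_faithful => a sa.
  have /conjg_fixP : [~ vecW a, (b, h)] == 1.
    by apply/commgP/esym/cAx; rewrite vecW_Ap sa.
  by rewrite vecW_conj => -[].
by apply/ApP; exists b; [move: Gx; rewrite GpE => /andP [/eqP] | rewrite h1].
Qed.

Lemma Ap_minnormal : minnormal (Ap p) (Gp p).
Proof.
apply/mingroupP; rewrite normal_norm ?Ap_normal // andbT; split.
  apply/trivgPn; exists (vecW (delta (Some 0%R))); first by rewrite vecW_Ap sum_delta.
  by apply: contra_neq (@delta_neq0 p 0%R) => -[].
move=> V /andP [ntV nVG] sVA; apply/eqP; rewrite eqEsubset sVA /=.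
have [v Vv ntv] := trivgPn _ ntV; have /ApP [a sa va] := subsetP sVA v Vv; subst v.
apply/subsetP => _ /ApP [b sb ->].
apply: (@sum0_sub_invariant p p_prime p_mod3 [pred a | vecW a \in V] _ _ _ a) => //=.
- exact: group1.
- by move=> a1 a2; rewrite !inE vecWD; apply: groupM.
- move=> h a1 Hh; rewrite !inE vecW_pact => Va1.
  by rewrite memJ_norm // (subsetP nVG) // permW_Gp groupV.
by apply: contra_neq ntv => ->.
Qed.

Definition hpart x : {perm P1 p} := x.2.

Lemma hpartM : {in [set: W] &, {morph hpart : x y / x * y}}.
Proof. by []. Qed.
Canonical hpart_morphism := Morphism hpartM.

Lemma ker_hpart : 'ker_(Gp p) hpart = Ap p.
Proof.
apply/eqP; rewrite eqEsubset subsetI Ap_sub_Gp /=; apply/andP; split.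
  apply/subsetP => -[a h] /setIP [Gx /mker /= h1].
  by apply/ApP; exists a; [move: Gx; rewrite GpE => /andP [/eqP] | rewrite h1].
by apply/subsetP => _ /ApP [a _ ->]; apply/kerP; rewrite ?inE.
Qed.

Lemma im_hpart : hpart @* Gp p = Hp p.
Proof.
apply/eqP; rewrite eqEsubset; apply/andP; split.
  by apply/subsetP => _ /morphimP [x _ Gx ->]; move: Gx; rewrite GpE => /andP [].
by apply/subsetP => h Hh; rewrite -[h]/(hpart (permW h)) mem_morphim ?in_setT ?permW_Gp.
Qed.

Lemma Ap_maxnormal : maxnormal (Ap p) (Gp p) (Gp p).
Proof.
have iso : Gp p / Ap p \isog Hp p.
  by rewrite -ker_hpart -im_hpart first_isog_loc ?subsetT.
by rewrite -quotient_simple ?Ap_normal // (isog_simple iso) Hp_simple.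
Qed.

Lemma der1_Gp_not_sub_Ap : ~~ ([~: Gp p, Gp p] \subset Ap p).
Proof.
have Pdiag := diag_PSL2 (Fp_two_neq0 p_prime p_mod3).
apply/subsetPn; exists (permW [~ diag 2%R, transl 1%R]).
  by rewrite permW_comm mem_commg // permW_Gp Hp_PSL2 ?transl_PSL2.
rewrite comm_diag_transl ?Fp_two_neq0 // mulr1 inE.
by rewrite (negbTE (transl_neq1 (Fp_one_sub_two_sqr_neq0 p_prime p_mod3))) andbF.
Qed.

End GpStructure.

Theorem lemma3p2 (p : nat) (K : groupType) (N : W p * K -> Prop) :
  prime p -> p %% 3 = 1 ->
  is_subgroup_GpxK N -> normalized_by_Gp N ->
  exists L : K -> Prop, is_subgroup L /\
    [\/ (forall g k, N (g, k) <-> g = 1%g /\ L k),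
        (forall g k, N (g, k) <-> g \in Ap p /\ L k) |
        (forall g k, N (g, k) <-> g \in Gp p /\ L k)].
Proof.
move=> p_prime p_mod3 [NG N1 NM NV] nN.
have minA := Ap_minnormal p_prime p_mod3.
have maxA := Ap_maxnormal p_prime p_mod3.
have comm_sub := comm_normal_sub minA maxA (cent_Ap_sub p) (der1_Gp_not_sub_Ap p_prime p_mod3).
have [M nsMG [L [sgL NE]]] := normalized_subgroup_prod NG N1 NM NV nN comm_sub.
exists L; split => //.
have [M1|MA|MG] := normal_trichotomy minA maxA (cent_Ap_sub p) nsMG.
- by apply: Or31 => g k; rewrite NE M1 inE; split => -[/eqP].
- by apply: Or32 => g k; rewrite NE MA.
- by apply: Or33 => g k; rewrite NE MG.
Qed.
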